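(* Let $1<a_1<a_2$ be coprime integers. There exists $T$ such that for all $t\in(T,\infty)$, $|P(t)|=|\mu_t'(r_0(t))|>\frac{1}{a_2}$. Consequently, the set $\mathcal{T}=\{t\in(1,\infty): |P(t)|>\frac{1}{a_2},\ r_0(t)\in\mathbb{Q}\}$ is dense in some ray $(T,\infty)$ (i.e. $(T,\infty)$ is contained in the closure of $\mathcal{T}$).
   Context: For $t\in[1,\infty)$ and $(u,v)\in\mathbb{R}^2$, $\|(u,v)\|_t=(|u|^t+|v|^t)^{1/t}$. Define $\mu_t(r)=\left\|\left(\frac{1-r}{a_1},\frac{r}{a_2}\right)\right\|_t$ for $r\in[0,1]$, $r_0(t)=\min\{r\in[0,1]:\mu_t(r)=\frac{1}{a_2}\}$, and $P(t)=\mu_t'(r_0(t))$ (derivative in $r$). *)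

From Stdlib Require Import Reals ZArith ClassicalEpsilon.
From Coquelicot Require Import Coquelicot.
Open Scope R_scope.

(* x^t for x >= 0 and real t >= 1, with the convention 0^t = 0
   (Stdlib's Rpower 0 t = exp (t * ln 0) = 1 is not the right value). *)
Definition rpow (x t : R) : R :=
  if Req_EM_T x 0 then 0 else Rpower x t.

Definition tnorm (t u v : R) : R :=
  rpow (rpow (Rabs u) t + rpow (Rabs v) t) (1 / t).

Definition mu (a1 a2 : Z) (t r : R) : R :=
  tnorm t ((1 - r) / IZR a1) (r / IZR a2).

Definition is_r0 (a1 a2 : Z) (t r : R) : Prop :=
  0 <= r <= 1 /\ mu a1 a2 t r = 1 / IZR a2 /\
  forall s, 0 <= s <= 1 -> mu a1 a2 t s = 1 / IZR a2 -> r <= s.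

(* r_0(t) := the minimum (chosen by Hilbert's epsilon; it exists since
   r = 1 is in the set, which is closed) *)
Definition r0 (a1 a2 : Z) (t : R) : R :=
  epsilon (inhabits 0) (is_r0 a1 a2 t).

Definition P (a1 a2 : Z) (t : R) : R :=
  Derive (mu a1 a2 t) (r0 a1 a2 t).

Definition is_rational (x : R) : Prop :=
  exists p q : Z, q <> 0%Z /\ x = IZR p / IZR q.

Definition calT (a1 a2 : Z) (t : R) : Prop :=
  1 < t /\ Rabs (P a1 a2 t) > 1 / IZR a2 /\ is_rational (r0 a1 a2 t).

(* For 0 < r < 1 we have a2 mu_t(r) = (u^t + r^t)^(1/t) with u = a2 (1 - r) / a1,
   so mu_t(r) = 1/a2 iff phi_t(r) := u^t + r^t = 1.  On (0, a2/(a1+a2)), where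
   r < u, phi_t is decreasing; it exceeds 1 at r = 1 - a1/a2 (where u = 1) and,
   once 2 (a2/(a1+a2))^t < 1, is below 1 at r = a2/(a1+a2) (where u = r).  So
   for large t, r0(t) is the unique root of phi_t in between.  At a root,
   |mu_t'| = |phi_t'| / (a2 t), and substituting u^t = 1 - r^t turns
   |phi_t'| > t into r^t < r^2, which holds for t > 2.  For density: phi_t(q)
   decreases in t, so r0 is decreasing, and for a rational q between r0(t2)
   and r0(t1) the intermediate value theorem in t yields t in (t1, t2) with
   r0(t) = q. *)

From Stdlib Require Import Reals ZArith ClassicalEpsilon Lra.
From Coquelicot Require Import Coquelicot.
Open Scope R_scope.

Lemma Rpower_pos x y : 0 < Rpower x y.
Proof. apply exp_pos. Qed.

Lemma Rpower_1_base y : Rpower 1 y = 1.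
Proof. unfold Rpower; rewrite ln_1, Rmult_0_r; apply exp_0. Qed.

Lemma Rpower_lt_exp_rev x s u : 0 < x < 1 -> s < u -> Rpower x u < Rpower x s.
Proof.
  intros hx hsu. assert (ln x < 0) by (rewrite <- ln_1; apply ln_increasing; lra).
  apply exp_increasing; nra.
Qed.

Lemma Rpower_eventually_lt x e : 0 < x < 1 -> 0 < e ->
  exists T, forall t, T < t -> Rpower x t < e.
Proof.
  intros hx he. assert (hl : ln x < 0) by (rewrite <- ln_1; apply ln_increasing; lra).
  exists (ln e / ln x). intros t ht.
  rewrite <- (exp_ln e he). apply exp_increasing.
  apply Rmult_lt_reg_r with (- / ln x).
  - apply Ropp_0_gt_lt_contravar, Rinv_lt_0_compat; lra.
  - replace (t * ln x * - / ln x) with (- t) by (field; lra).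
    replace (ln e * - / ln x) with (- (ln e / ln x)) by (field; lra). lra.
Qed.

Lemma is_derive_Rpower_base y x : 0 < x ->
  is_derive (fun x => Rpower x y) x (y * Rpower x (y - 1)).
Proof. intros; apply is_derive_Reals, derivable_pt_lim_power; auto. Qed.

Lemma IVT_decreasing (f : R -> R) x y v :
  (forall z, x <= z <= y -> continuity_pt f z) -> x < y -> f y < v < f x ->
  exists z, x < z < y /\ f z = v.
Proof.
  intros hf hxy hv.
  destruct (Ranalysis5.IVT_interv (fun z => v - f z) x y) as [z [hz e]]; try lra.
  - intros z hz. apply continuity_pt_minus; auto.
    apply continuity_pt_const. intros ??; auto.
  - exists z. split; [|lra].
    split; apply Rnot_le_lt; intros hle;
      [assert (z = x) by lra | assert (z = y) by lra]; subst; lra.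
Qed.

Lemma exists_rational_between x y : x < y ->
  exists q, is_rational q /\ x < q < y.
Proof.
  intros hxy. destruct (archimed (/ (y - x))) as [hn _].
  assert (hd : 0 < / (y - x)) by (apply Rinv_0_lt_compat; lra).
  set (n := up (/ (y - x))) in *.
  assert (hn0 : 0 < IZR n) by lra.
  destruct (archimed (x * IZR n)) as [hp1 hp2].
  set (p := up (x * IZR n)) in *.
  assert (hstep : 1 < (y - x) * IZR n).
  { apply Rmult_lt_reg_l with (/ (y - x)); auto.
    rewrite <- Rmult_assoc, Rinv_l by lra. lra. }
  exists (IZR p / IZR n). split.
  - exists p, n. split; auto. intros e. rewrite e in hn0. lra.
  - split; apply Rmult_lt_reg_r with (IZR n); auto;
      unfold Rdiv; rewrite Rmult_assoc, Rinv_l by lra; lra.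
Qed.

Lemma rpow_pos_base x t : 0 < x -> rpow x t = Rpower x t.
Proof. intros hx; unfold rpow; destruct (Req_EM_T x 0); [lra | auto]. Qed.

Lemma tnorm_pos t u v : 0 < u -> 0 < v ->
  tnorm t u v = Rpower (Rpower u t + Rpower v t) (1 / t).
Proof.
  intros hu hv. unfold tnorm.
  pose proof (Rpower_pos u t); pose proof (Rpower_pos v t).
  rewrite !Rabs_right by lra.
  rewrite (rpow_pos_base u), (rpow_pos_base v), rpow_pos_base; lra.
Qed.

Lemma tnorm_scale t c u v : 0 < t -> 0 < c -> 0 < u -> 0 < v ->
  tnorm t (c * u) (c * v) = c * tnorm t u v.
Proof.
  intros ht hc hu hv.
  pose proof (Rpower_pos c t); pose proof (Rpower_pos u t); pose proof (Rpower_pos v t).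
  rewrite !tnorm_pos by nra.
  rewrite <- !Rpower_mult_distr, <- Rmult_plus_distr_l, <- Rpower_mult_distr by lra.
  rewrite Rpower_mult. replace (t * (1 / t)) with 1 by (field; lra).
  rewrite Rpower_1; auto.
Qed.

Section Level.

Variables A1 A2 : R.
Hypothesis A_pos : 0 < A1 < A2.

Definition first_coord (r : R) : R := A2 * (1 - r) / A1.

Definition phi (t r : R) : R := Rpower (first_coord r) t + Rpower r t.

Definition dphi (t r : R) : R :=
  t * Rpower r (t - 1) - t * (A2 / A1) * Rpower (first_coord r) (t - 1).

Definition r_lo : R := 1 - A1 / A2.

Definition r_hi : R := A2 / (A1 + A2).

Lemma r_lo_pos : 0 < r_lo.
Proof.
  unfold r_lo. replace (1 - A1 / A2) with ((A2 - A1) / A2) by (field; lra).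
  apply Rdiv_lt_0_compat; lra.
Qed.

Lemma r_lo_lt_r_hi : r_lo < r_hi.
Proof.
  unfold r_lo, r_hi.
  replace (A2 / (A1 + A2)) with (1 - A1 / A2 + A1 * A1 / (A2 * (A1 + A2)))
    by (field; lra).
  assert (0 < A1 * A1 / (A2 * (A1 + A2))) by (apply Rdiv_lt_0_compat; nra).
  lra.
Qed.

Lemma r_hi_lt_1 : r_hi < 1.
Proof.
  unfold r_hi. replace (A2 / (A1 + A2)) with (1 - A1 / (A1 + A2)) by (field; lra).
  assert (0 < A1 / (A1 + A2)) by (apply Rdiv_lt_0_compat; lra). lra.
Qed.

Lemma first_coord_pos r : r < 1 -> 0 < first_coord r.
Proof. intros; apply Rdiv_lt_0_compat; nra. Qed.

Lemma first_coord_r_lo : first_coord r_lo = 1.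
Proof. unfold first_coord, r_lo; field; lra. Qed.

Lemma first_coord_r_hi : first_coord r_hi = r_hi.
Proof. unfold first_coord, r_hi; field; lra. Qed.

Lemma first_coord_lt_1 r : r_lo < r -> first_coord r < 1.
Proof.
  intros hr. replace (first_coord r) with (1 - A2 / A1 * (r - r_lo))
    by (unfold first_coord, r_lo; field; lra).
  assert (0 < A2 / A1) by (apply Rdiv_lt_0_compat; lra). nra.
Qed.

Lemma lt_first_coord r : r < r_hi -> r < first_coord r.
Proof.
  intros hr. replace (first_coord r) with (r + (A1 + A2) / A1 * (r_hi - r))
    by (unfold first_coord, r_hi; field; lra).
  assert (0 < (A1 + A2) / A1) by (apply Rdiv_lt_0_compat; lra). nra.
Qed.

Lemma is_derive_phi t r : 0 < r < 1 -> is_derive (phi t) r (dphi t r).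
Proof.
  intros hr. unfold phi, dphi.
  replace (t * Rpower r (t - 1) - t * (A2 / A1) * Rpower (first_coord r) (t - 1))
    with (- (A2 / A1) * (t * Rpower (first_coord r) (t - 1)) + t * Rpower r (t - 1))
    by ring.
  apply (is_derive_plus (fun r => Rpower (first_coord r) t) (fun r => Rpower r t)).
  - apply (is_derive_comp (fun x => Rpower x t) first_coord).
    + apply is_derive_Rpower_base, first_coord_pos; lra.
    + unfold first_coord. auto_derive; auto. field. lra.
  - apply is_derive_Rpower_base; lra.
Qed.

Lemma dphi_neg t r : 1 < t -> 0 < r < r_hi -> dphi t r < 0.
Proof.
  intros ht hr. unfold dphi.
  assert (hK : 1 < A2 / A1).
  { replace (A2 / A1) with (1 + (A2 - A1) / A1) by (field; lra).
    assert (0 < (A2 - A1) / A1) by (apply Rdiv_lt_0_compat; lra). lra. }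
  assert (hlt : Rpower r (t - 1) < Rpower (first_coord r) (t - 1)).
  { apply Rlt_Rpower_l; [lra|]. split; [lra|]. apply lt_first_coord; lra. }
  pose proof (Rpower_pos (first_coord r) (t - 1)).
  assert (Rpower r (t - 1) < A2 / A1 * Rpower (first_coord r) (t - 1)) by nra.
  nra.
Qed.

Lemma phi_decreasing t x y : 1 < t -> 0 < x < y -> y < r_hi -> phi t y < phi t x.
Proof.
  intros ht hxy hy.
  pose proof r_hi_lt_1.
  enough (- phi t x < - phi t y) by lra.
  apply (incr_function (fun r => - phi t r) 0 r_hi (fun r => - dphi t r));
    simpl; try lra.
  - intros r h0 h1. apply (is_derive_opp (phi t)), is_derive_phi; lra.
  - intros r h0 h1. pose proof (dphi_neg t r ht (conj h0 h1)). lra.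
Qed.

Lemma phi_decreasing_in_t t1 t2 r : r_lo < r < 1 -> t1 < t2 -> phi t2 r < phi t1 r.
Proof.
  intros hr ht. pose proof r_lo_pos. unfold phi.
  pose proof (Rpower_lt_exp_rev (first_coord r) t1 t2).
  pose proof (Rpower_lt_exp_rev r t1 t2).
  pose proof (first_coord_pos r). pose proof (first_coord_lt_1 r). intuition lra.
Qed.

Lemma continuity_phi_r t r : 0 < r < 1 -> continuity_pt (phi t) r.
Proof.
  intros hr. apply continuity_pt_filterlim.
  apply (ex_derive_continuous (K := R_AbsRing) (V := R_NormedModule)).
  eexists. apply is_derive_phi; auto.
Qed.

Lemma continuity_phi_t r t : continuity_pt (fun t => phi t r) t.
Proof.
  apply continuity_pt_filterlim.
  apply (ex_derive_continuous (K := R_AbsRing) (V := R_NormedModule)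
           (fun t => phi t r)).
  unfold phi, Rpower. auto_derive. auto.
Qed.

Lemma one_lt_phi_r_lo t : 1 < phi t r_lo.
Proof.
  unfold phi. rewrite first_coord_r_lo, Rpower_1_base.
  pose proof (Rpower_pos r_lo t). lra.
Qed.

Lemma phi_r_hi_eventually_lt_1 : exists T, forall t, T < t -> phi t r_hi < 1.
Proof.
  pose proof r_lo_pos. pose proof r_lo_lt_r_hi. pose proof r_hi_lt_1.
  destruct (Rpower_eventually_lt r_hi (1 / 2)) as [T HT]; try lra.
  exists T. intros t ht. unfold phi. rewrite first_coord_r_hi.
  specialize (HT t ht). lra.
Qed.

Lemma phi_root_exists t : phi t r_hi < 1 -> exists r, r_lo < r < r_hi /\ phi t r = 1.
Proof.
  intros hhi. pose proof r_lo_pos. pose proof r_lo_lt_r_hi. pose proof r_hi_lt_1.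
  apply IVT_decreasing.
  - intros z hz. apply continuity_phi_r. lra.
  - auto.
  - split; [auto | apply one_lt_phi_r_lo].
Qed.

(* With [phi t r = 1], [dphi t r < -t] reduces to [r ^ t < r ^ 2]. *)
Lemma dphi_lt_at_root t r : 2 < t -> 0 < r < 1 -> phi t r = 1 -> dphi t r < - t.
Proof.
  intros ht hr hphi. unfold phi, dphi in *.
  set (u := first_coord r) in *.
  assert (hu : 0 < u) by (apply first_coord_pos; lra).
  assert (hK : A2 / A1 = u / (1 - r)) by (unfold u, first_coord; field; lra).
  assert (hsplit : forall x, 0 < x -> Rpower x (t - 1) = Rpower x t / x).
  { intros x hx. unfold Rminus. rewrite Rpower_plus, Rpower_Ropp, Rpower_1 by lra.
    reflexivity. }
  rewrite hK, !hsplit by lra.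
  assert (hsq : Rpower r t < r * r).
  { replace (r * r) with (Rpower r (INR 2)) by (rewrite Rpower_pow by lra; simpl; ring).
    apply Rpower_lt_exp_rev; simpl; lra. }
  replace (Rpower u t) with (1 - Rpower r t) by lra.
  set (Y := Rpower r t) in *.
  apply Rmult_lt_reg_r with (r * (1 - r) / t).
  { apply Rdiv_lt_0_compat; nra. }
  replace ((t * (Y / r) - t * (u / (1 - r)) * ((1 - Y) / u)) * (r * (1 - r) / t))
    with (Y * (1 - r) - r * (1 - Y)) by (field; repeat split; lra).
  replace (- t * (r * (1 - r) / t)) with (- r * (1 - r)) by (field; lra).
  nra.
Qed.

End Level.

Section Mu.

Variables a1 a2 : Z.
Local Notation A1 := (IZR a1).
Local Notation A2 := (IZR a2).

Hypothesis a_pos : 0 < A1 < A2.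

Lemma mu_0 t : 0 < t -> mu a1 a2 t 0 = 1 / A1.
Proof.
  intros ht. unfold mu, tnorm, rpow.
  replace ((1 - 0) / A1) with (1 / A1) by (field; lra).
  replace (0 / A2) with 0 by (field; lra).
  assert (h : 0 < 1 / A1) by (apply Rdiv_lt_0_compat; lra).
  rewrite Rabs_R0, Rabs_right by lra.
  destruct (Req_EM_T 0 0) as [_|]; [|lra].
  destruct (Req_EM_T (1 / A1) 0) as [|_]; [lra|].
  rewrite Rplus_0_r.
  destruct (Req_EM_T (Rpower (1 / A1) t) 0) as [e|_].
  - pose proof (Rpower_pos (1 / A1) t). lra.
  - rewrite Rpower_mult. replace (t * (1 / t)) with 1 by (field; lra).
    apply Rpower_1; auto.
Qed.

Lemma mu_eq_phi t r : 0 < t -> 0 < r < 1 ->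
  mu a1 a2 t r = / A2 * Rpower (phi A1 A2 t r) (1 / t).
Proof.
  intros ht hr. unfold mu, phi.
  pose proof (first_coord_pos A1 A2 a_pos r).
  replace ((1 - r) / A1) with (/ A2 * first_coord A1 A2 r)
    by (unfold first_coord; field; lra).
  replace (r / A2) with (/ A2 * r) by (field; lra).
  rewrite tnorm_scale, tnorm_pos by (try apply Rinv_0_lt_compat; lra).
  reflexivity.
Qed.

Lemma mu_at_root t r : 0 < t -> 0 < r < 1 -> phi A1 A2 t r = 1 ->
  mu a1 a2 t r = 1 / A2.
Proof.
  intros ht hr hphi. rewrite mu_eq_phi, hphi, Rpower_1_base by auto. field; lra.
Qed.

Lemma mu_gt_of_phi_gt t r : 0 < t -> 0 < r < 1 -> 1 < phi A1 A2 t r ->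
  1 / A2 < mu a1 a2 t r.
Proof.
  intros ht hr hphi. rewrite mu_eq_phi by auto.
  assert (1 < Rpower (phi A1 A2 t r) (1 / t)).
  { pose proof (Rlt_Rpower_l 1 (phi A1 A2 t r) (1 / t)) as hmono.
    rewrite Rpower_1_base in hmono. apply hmono; [apply Rdiv_lt_0_compat |]; lra. }
  assert (0 < / A2) by (apply Rinv_0_lt_compat; lra).
  unfold Rdiv. nra.
Qed.

Lemma r0_eq_root t r : 1 < t -> 0 < r < r_hi A1 A2 -> phi A1 A2 t r = 1 ->
  r0 a1 a2 t = r.
Proof.
  intros ht hr hphi.
  pose proof (r_hi_lt_1 A1 A2 a_pos).
  assert (hmin : is_r0 a1 a2 t r).
  { split; [lra|]. split; [apply mu_at_root; lra|].
    intros s hs hmu. destruct (Rle_lt_dec r s) as [|hsr]; auto. exfalso.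
    destruct (Req_dec s 0) as [->|hs0].
    - rewrite mu_0 in hmu by lra.
      assert (1 / A2 < 1 / A1) by (apply Rmult_lt_compat_l, Rinv_lt_contravar; nra).
      lra.
    - assert (1 < phi A1 A2 t s).
      { rewrite <- hphi. apply phi_decreasing; lra. }
      pose proof (mu_gt_of_phi_gt t s). lra. }
  assert (hr0 : is_r0 a1 a2 t (r0 a1 a2 t)) by (unfold r0; apply epsilon_spec; eauto).
  destruct hmin as [_ [_ hle]], hr0 as [hs0 [hmu0 hle0]].
  apply Rle_antisym; auto. apply hle0; [lra | apply mu_at_root; lra].
Qed.

Lemma Derive_mu_at_root t r : 0 < t -> 0 < r < 1 -> phi A1 A2 t r = 1 ->
  Derive (mu a1 a2 t) r = / A2 * / t * dphi A1 A2 t r.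
Proof.
  intros ht hr hphi. apply is_derive_unique.
  apply (is_derive_ext_loc (fun r => / A2 * Rpower (phi A1 A2 t r) (1 / t))).
  - apply (filter_imp (fun y => 0 < y /\ y < 1)).
    + intros y hy. symmetry. apply mu_eq_phi; auto.
    + apply (open_and _ _ (open_gt 0) (open_lt 1)). lra.
  - replace (/ A2 * / t * dphi A1 A2 t r) with
      (/ A2 * (dphi A1 A2 t r * (1 / t * Rpower (phi A1 A2 t r) (1 / t - 1))))
      by (rewrite hphi, Rpower_1_base; field; lra).
    apply (is_derive_scal (fun r => Rpower (phi A1 A2 t r) (1 / t))).
    apply (is_derive_comp (fun x => Rpower x (1 / t)) (phi A1 A2 t)).
    + apply is_derive_Rpower_base. lra.
    + apply is_derive_phi; lra.
Qed.

Lemma abs_Derive_mu_at_root t r : 2 < t -> 0 < r < 1 -> phi A1 A2 t r = 1 ->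
  Rabs (Derive (mu a1 a2 t) r) > 1 / A2.
Proof.
  intros ht hr hphi. rewrite Derive_mu_at_root by (auto; lra).
  pose proof (dphi_lt_at_root A1 A2 a_pos t r ht hr hphi).
  assert (0 < / A2 * / t) by (apply Rmult_lt_0_compat; apply Rinv_0_lt_compat; lra).
  replace (1 / A2) with (/ A2 * / t * t) by (field; lra).
  rewrite Rabs_left by nra. nra.
Qed.

Lemma r0_eventually_root :
  exists T, 2 <= T /\ forall t, T < t ->
    r_lo A1 A2 < r0 a1 a2 t < r_hi A1 A2 /\ phi A1 A2 t (r0 a1 a2 t) = 1.
Proof.
  destruct (phi_r_hi_eventually_lt_1 A1 A2 a_pos) as [T HT].
  exists (Rmax 2 T). split; [apply Rmax_l |]. intros t ht.
  pose proof (Rmax_l 2 T); pose proof (Rmax_r 2 T).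
  destruct (phi_root_exists A1 A2 a_pos t) as [r [hr hphi]]; [apply HT; lra |].
  pose proof (r_lo_pos A1 A2 a_pos).
  rewrite (r0_eq_root t r); auto; lra.
Qed.

Section EventualRoot.

Variable T : R.
Hypothesis T_ge_2 : 2 <= T.
Hypothesis r0_root : forall t, T < t ->
  r_lo A1 A2 < r0 a1 a2 t < r_hi A1 A2 /\ phi A1 A2 t (r0 a1 a2 t) = 1.

Lemma abs_P_gt t : T < t -> Rabs (P a1 a2 t) > 1 / A2.
Proof.
  intros ht. destruct (r0_root t ht) as [hr hphi].
  pose proof (r_lo_pos A1 A2 a_pos); pose proof (r_hi_lt_1 A1 A2 a_pos).
  apply abs_Derive_mu_at_root; auto; lra.
Qed.

Lemma r0_decreasing t1 t2 : T < t1 -> t1 < t2 -> r0 a1 a2 t2 < r0 a1 a2 t1.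
Proof.
  intros ht1 ht12.
  destruct (r0_root t1 ht1) as [hr1 hphi1], (r0_root t2 ltac:(lra)) as [hr2 hphi2].
  pose proof (r_lo_pos A1 A2 a_pos); pose proof (r_hi_lt_1 A1 A2 a_pos).
  assert (hlt : phi A1 A2 t2 (r0 a1 a2 t1) < 1).
  { rewrite <- hphi1. apply phi_decreasing_in_t; auto; lra. }
  destruct (Rlt_le_dec (r0 a1 a2 t2) (r0 a1 a2 t1)) as [| hle]; auto.
  destruct (Req_dec (r0 a1 a2 t1) (r0 a1 a2 t2)) as [e | ne]; [rewrite e in hlt; lra |].
  pose proof (phi_decreasing A1 A2 a_pos t2 (r0 a1 a2 t1) (r0 a1 a2 t2)). lra.
Qed.

Lemma r0_rational_dense t1 t2 : T < t1 -> t1 < t2 ->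
  exists t, t1 < t < t2 /\ is_rational (r0 a1 a2 t).
Proof.
  intros ht1 ht12.
  destruct (r0_root t1 ht1) as [hr1 hphi1], (r0_root t2 ltac:(lra)) as [hr2 hphi2].
  pose proof (r_lo_pos A1 A2 a_pos).
  destruct (exists_rational_between _ _ (r0_decreasing t1 t2 ht1 ht12))
    as [q [hq [hq2 hq1]]].
  destruct (IVT_decreasing (fun t => phi A1 A2 t q) t1 t2 1) as [t [ht hphi]]; auto.
  - intros s _. apply continuity_phi_t.
  - split.
    + rewrite <- hphi2. apply phi_decreasing; auto; lra.
    + rewrite <- hphi1. apply phi_decreasing; auto; lra.
  - exists t. split; auto.
    rewrite (r0_eq_root t q); auto; lra.
Qed.

End EventualRoot.

End Mu.

Theorem proposition4 (a1 a2 : Z) :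
  (1 < a1)%Z -> (a1 < a2)%Z -> Z.gcd a1 a2 = 1%Z ->
  (exists T : R, forall t : R, T < t -> Rabs (P a1 a2 t) > 1 / IZR a2) /\
  (exists T : R, forall x : R, T < x ->
     forall eps : R, 0 < eps -> exists t : R, calT a1 a2 t /\ Rabs (t - x) < eps).
Proof.
  intros h1 h2 _.
  apply IZR_lt in h1. apply IZR_lt in h2.
  assert (hA : 0 < IZR a1 < IZR a2) by lra.
  destruct (r0_eventually_root a1 a2 hA) as [T [hT hroot]].
  split; exists T.
  - exact (abs_P_gt a1 a2 hA T hT hroot).
  - intros x hx eps heps.
    destruct (r0_rational_dense a1 a2 hA T hT hroot x (x + eps / 2)) as [t [ht hq]];
      [lra | lra |].
    exists t. split.
    + split; [lra |]. split; [apply (abs_P_gt a1 a2 hA T hT hroot); lra | exact hq].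
    + rewrite Rabs_right; lra.
Qed.
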